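(* Let $\Gamma_0$ be a torsion discrete abelian group, realized as a subgroup of $\bigoplus_{p} \bigl(\bigoplus_{j \in J_p} \mathcal{C}(p^\infty)\bigr)$ (direct sum over primes $p$, each $J_p$ an index set), and for each prime $p$ write $\Gamma^{(p)} := \bigoplus_{j \in J_p} \mathcal{C}(p^\infty)$. Let $N = p_1^{n_1}\cdots p_k^{n_k}$ with distinct primes $p_i$ and $n_i \in \mathbb{N}$, and let $E \subset \Gamma_0$ be $N$-PR. Then there exist subsets $E_i \subset \Gamma^{(p_i)}$ that are $p_i^{n_i}$-PR, $1 \le i \le k$, and bijections $f_i: E_1 \to E_i$ for $2 \le i \le k$, such that $$E = \{\gamma \oplus f_2(\gamma) \oplus \cdots \oplus f_k(\gamma) \oplus \beta_\gamma : \gamma \in E_1\}$$ for some elements $\beta_\gamma \in \bigoplus_{p \notin \{p_1,\dots,p_k\}} \Gamma^{(p)}$.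
   Context: $\mathcal{C}(p^\infty)$ denotes the group of all $p^m$-th roots of unity, $m \ge 1$. For a discrete abelian group $\Delta$ with compact dual $\widehat{\Delta}$ and $M \in \mathbb{N}$, a subset $E \subset \Delta$ is $M$-PR if for every function $\varphi: E \to \mathbb{Z}_M$ (the $M$-th roots of unity in the unit circle) there exists $x \in \widehat{\Delta}$ with $\varphi(\gamma) = \gamma(x)$ for all $\gamma \in E$. *)

From mathcomp Require Import all_boot all_algebra.
From mathcomp Require Import reals Rstruct complex.
From Stdlib Require Import List.
Import GRing.Theory Num.Theory.
Set Implicit Arguments. Unset Strict Implicit. Unset Printing Implicit Defensive.
Local Open Scope ring_scope.

Definition CC : Type := complex Rdefinitions.R.

(* Ambient carrier: families (g p j)_{p, j in J p} of complex numbers.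
   The group ⊕_p ⊕_{j ∈ J p} C(p^∞) is the subset [ambient J] below,
   with pointwise multiplication. *)
Definition amb (J : nat -> Type) : Type := forall p : nat, J p -> CC.

Definition amul (J : nat -> Type) (g h : amb J) : amb J := fun p j => g p j * h p j.
Definition aone (J : nat -> Type) : amb J := fun _ _ => 1.
Definition ainv (J : nat -> Type) (g : amb J) : amb J := fun p j => (g p j)^-1.

Definition Cpinf (p : nat) (z : CC) : Prop := exists m : nat, (0 < m)%N /\ z ^+ (p ^ m) = 1.

Definition ambient (J : nat -> Type) (g : amb J) : Prop :=
  (forall p (j : J p), ~~ prime p -> g p j = 1) /\
  (forall p (j : J p), Cpinf p (g p j)) /\
  (exists s : list {p : nat & J p},
      forall p (j : J p), g p j <> 1 -> In (existT _ p j) s).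

Definition Gammap (J : nat -> Type) (p : nat) (g : amb J) : Prop :=
  ambient g /\ forall q (j : J q), q <> p -> g q j = 1.

Definition Gamma_outside (J : nat -> Type) (P : nat -> Prop) (g : amb J) : Prop :=
  ambient g /\ forall q (j : J q), P q -> g q j = 1.

Definition is_subgroup (J : nat -> Type) (G : amb J -> Prop) : Prop :=
  (forall g, G g -> ambient g) /\ G (@aone J) /\
  (forall g h, G g -> G h -> G (amul g h)) /\ (forall g, G g -> G (ainv g)).

(* x is an element of the dual group of G, i.e. a continuous (G is discrete)
   homomorphism G -> T into the circle group *)
Definition character (J : nat -> Type) (G : amb J -> Prop) (x : amb J -> CC) : Prop :=
  (forall g, G g -> `|x g| = 1) /\
  (forall g h, G g -> G h -> x (amul g h) = x g * x h).

Definition PR (J : nat -> Type) (G : amb J -> Prop) (M : nat) (E : amb J -> Prop) : Prop :=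
  (forall g, E g -> G g) /\
  forall phi : amb J -> CC, (forall g, E g -> phi g ^+ M = 1) ->
    exists x, character G x /\ forall g, E g -> phi g = x g.

From mathcomp Require Import all_boot all_algebra.
From mathcomp Require Import reals Rstruct complex.
From mathcomp Require Import boolp classical_sets functions.
From Stdlib Require Import List ClassicalEpsilon.
Import GRing.Theory Num.Theory.
Set Implicit Arguments. Unset Strict Implicit. Unset Printing Implicit Defensive.
Local Open Scope ring_scope.

(* Each x in the torsion group is the product of its q-primary components
   [aproj q x], and [aproj q x] is a power x ^+ e with e = 1 modulo any
   prescribed power of q, so characters see the components through powers.
   If two points of the N-PR set E had the same p_i-component, the function
   equal to a nontrivial p_i-th root of unity z at one of them and 1 elsewhere
   would come from a character chi; chi maps their quotient d to z, while
   d ^+ e is trivial for some e = 1 mod p_i, forcing z = z ^+ e = 1.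
   Hence every p_i-projection is injective on E, which yields E_i, the
   bijections f_i and the remaining component beta.  A character of Gamma0
   realizing phi o aproj (p i) agrees with phi on E_i, since
   chi (x ^+ e) = phi ^+ e = phi for e = 1 mod p_i ^ n_i; restricted to
   Gamma0 ∩ Gamma^(p_i) it extends to Gamma^(p_i) by Zorn's lemma, adjoining
   one element at a time using the divisibility of the circle group. *)

Lemma expr_dvdn_eq1 (R : pzSemiRingType) (z : R) d m :
  (d %| m)%N -> z ^+ d = 1 -> z ^+ m = 1.
Proof. by case/dvdnP=> k -> zd; rewrite mulnC exprM zd expr1n. Qed.

Lemma expr_coprime_eq1 (R : pzSemiRingType) (z : R) a b :
  coprime a b -> z ^+ a = 1 -> z ^+ b = 1 -> z = 1.
Proof.
(* e := chinese a b 0 1 is 0 mod a and 1 mod b, so 1 = z ^+ e = z. *)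
move=> co za zb; have ze1 : z ^+ chinese a b 0 1 = 1.
  by rewrite -(expr_mod _ za) (chinese_modl co) expr_mod.
by rewrite -[z]expr1 -(expr_mod 1 zb) -(chinese_modr co 0) expr_mod.
Qed.

Lemma nontrivial_root_of_unity (C : numClosedFieldType) q :
  (1 < q)%N -> exists2 z : C, z != 1 & z ^+ q = 1.
Proof.
move=> q_gt1; have q0 : (0 < q.-1)%N by rewrite -ltnS prednK // ltnW.
have [x hx] := @solve_monicpoly C q.-1 (fun _ => -1) q0.
have sum_x : \sum_(i < q) x ^+ i = 0.
  rewrite -(prednK (ltnW q_gt1)) big_ord_recr /= hx -big_split /=.
  by apply: big1 => i _; rewrite mulN1r addrN.
exists x; last by apply/eqP; rewrite -subr_eq0 subrX1 sum_x mulr0.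
apply/eqP => x1; move: sum_x; rewrite x1; under eq_bigr do rewrite expr1n.
by rewrite sumr_const card_ord => /eqP; rewrite pnatr_eq0 gtn_eqF // ltnW.
Qed.

Section AmbientGroup.
Variable J : nat -> Type.
Local Notation T := (amb J).
Implicit Types (g h : T) (G : T -> Prop).

Definition apow g (n : nat) : T := fun p j => g p j ^+ n.
Definition amask (P : pred nat) g : T := fun p j => if P p then g p j else 1.
Definition aproj (q : nat) g : T := amask (pred1 q) g.

Lemma amb_ext g h : (forall p j, g p j = h p j) -> g = h.
Proof.
move=> gh; apply: functional_extensionality_dep => p.
exact: functional_extensionality_dep.
Qed.

Lemma apow0 g : apow g 0 = @aone J.
Proof. by apply: amb_ext => p j; rewrite /apow expr0. Qed.

Lemma apowS g n : apow g n.+1 = amul (apow g n) g.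
Proof. by apply: amb_ext => p j; rewrite /apow /amul exprSr. Qed.

Lemma apowD g m n : apow g (m + n) = amul (apow g m) (apow g n).
Proof. by apply: amb_ext => p j; rewrite /apow /amul exprD. Qed.

Lemma apowM g m n : apow g (m * n) = apow (apow g m) n.
Proof. by apply: amb_ext => p j; rewrite /apow exprM. Qed.

Lemma ambient_neq0 g p j : ambient g -> g p j != 0.
Proof.
case=> g1 [gC _]; have [pr|npr] := boolP (prime p); last by rewrite g1 ?oner_neq0.
have [m [_ gm]] := gC p j; apply: contra_eq_neq gm => ->.
by rewrite expr0n expn_eq0 eqn0Ngt prime_gt0 // eq_sym oner_neq0.
Qed.

Lemma aone_ambient : ambient (@aone J).
Proof.
split=> //; split; first by move=> p j; exists 1%N; rewrite expr1n.
by exists nil.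
Qed.

Lemma amul_ambient g h : ambient g -> ambient h -> ambient (amul g h).
Proof.
move=> [g1 [gC [s gs]]] [h1 [hC [t ht]]]; split.
  by move=> p j np; rewrite /amul g1 // h1 // mulr1.
split.
  move=> p j; have [m [m0 gm]] := gC p j; have [m' [_ hm]] := hC p j.
  exists (m + m')%N; split; first by rewrite addn_gt0 m0.
  rewrite /amul exprMn (expr_dvdn_eq1 _ gm) ?(expr_dvdn_eq1 _ hm) ?mulr1 //.
    by rewrite dvdn_exp2l // leq_addl.
  by rewrite dvdn_exp2l // leq_addr.
exists (s ++ t) => p j ghj; apply: in_or_app.
have [gj|gj] := eqVneq (g p j) 1; last by left; apply/gs/eqP.
by right; apply: ht => hj; apply: ghj; rewrite /amul gj hj mulr1.
Qed.

Lemma ainv_ambient g : ambient g -> ambient (ainv g).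
Proof.
move=> [g1 [gC [s gs]]]; split; first by move=> p j np; rewrite /ainv g1 // invr1.
split; last by exists s => p j gj; apply: gs => g1j; apply: gj; rewrite /ainv g1j invr1.
by move=> p j; have [m [m0 gm]] := gC p j; exists m; rewrite /ainv exprVn gm invr1.
Qed.

Lemma amask_ambient P g : ambient g -> ambient (amask P g).
Proof.
move=> [g1 [gC [s gs]]]; rewrite /amask; split.
  by move=> p j np; case: ifP => // _; apply: g1.
split; first by move=> p j; case: ifP => _ //; exists 1%N; rewrite expr1n.
by exists s => p j; case: ifP => // _; apply: gs.
Qed.

Lemma aproj_Gammap q g : ambient g -> Gammap q (aproj q g).
Proof.
split; first exact: amask_ambient.
by move=> r j /eqP rq; rewrite /aproj /amask /= (negbTE rq).
Qed.

Lemma apow_ambient g n : ambient g -> ambient (apow g n).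
Proof.
move=> ag; elim: n => [|n IH]; first by rewrite apow0; exact: aone_ambient.
by rewrite apowS; apply: amul_ambient.
Qed.

Lemma amulV g : ambient g -> amul g (ainv g) = @aone J.
Proof. by move=> ag; apply: amb_ext => p j; rewrite /amul /ainv divff // ambient_neq0. Qed.

Lemma ambient_exponent g : ambient g -> exists2 M, (0 < M)%N & apow g M = @aone J.
Proof.
move=> [g1 [gC [s gs]]].
pose gt (t : {p : nat & J p}) := g (projT1 t) (projT2 t).
suff [M M_gt0 gM] : exists2 M, (0 < M)%N & forall t, In t s -> gt t ^+ M = 1.
  exists M => //; apply: amb_ext => p j; rewrite /apow /aone.
  have [->|gj] := eqVneq (g p j) 1; first by rewrite expr1n.
  by apply: (gM (existT _ p j)); apply/gs/eqP.
elim: s {gs} => [|[p j] s [M M_gt0 gM]]; first by exists 1%N.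
have [pr|npr] := boolP (prime p); last first.
  by exists M => // t [<-|/gM//]; rewrite /gt /= g1 ?expr1n.
have [m [_ gm]] := gC p j.
exists (M * p ^ m)%N; first by rewrite muln_gt0 M_gt0 expn_gt0 prime_gt0.
move=> t [<-|/gM tM]; first by apply: expr_dvdn_eq1 gm; apply: dvdn_mull.
by apply: expr_dvdn_eq1 tM; apply: dvdn_mulr.
Qed.

Lemma ambient_order_split g q : ambient g -> prime q ->
  exists a c, [/\ coprime q c, forall j : J q, g q j ^+ (q ^ a) = 1
                & forall r (j : J r), r != q -> g r j ^+ c = 1].
Proof.
move=> ag pq; have [M M_gt0 gM] := ambient_exponent ag.
have [c qc defM] := pfactor_coprime pq M_gt0.
have gjM r (j : J r) : g r j ^+ (q ^ logn q M * c) = 1.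
  by rewrite mulnC -defM; move/(congr1 (fun h => h r j)): gM.
have [_ [gC _]] := ag.
exists (logn q M), c; split=> // [j|r j rq].
  have [m [_ gm]] := gC q j; apply: (@expr_coprime_eq1 _ _ c (q ^ m)).
  - by rewrite coprime_sym coprimeXl.
  - by rewrite -exprM gjM.
  - by rewrite -exprM mulnC exprM gm expr1n.
have [pr|npr] := boolP (prime r); last by have [g1 _] := ag; rewrite g1 ?expr1n.
have [m [_ gm]] := gC r j; apply: (@expr_coprime_eq1 _ _ (q ^ logn q M) (r ^ m)).
- by rewrite coprimeXl // coprime_sym coprimeXl // prime_coprime // dvdn_prime2 // eq_sym.
- by rewrite -exprM mulnC gjM.
- by rewrite -exprM mulnC exprM gm expr1n.
Qed.

Lemma aproj_apow g q A : ambient g -> prime q ->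
  exists2 e, e = 1 %[mod q ^ A] & apow g e = aproj q g.
Proof.
move=> ag pq; have [a [c [qc gq gc]]] := ambient_order_split ag pq.
have co : coprime (q ^ (a + A)) c by rewrite coprimeXl.
(* e = 1 mod q ^ a fixes the q-coordinates and e = 0 mod c kills the others. *)
set e := chinese (q ^ (a + A)) c 1 0.
have e_mod d : (d <= a + A)%N -> e = 1 %[mod q ^ d].
  move=> le_d; rewrite -(modn_dvdm e (dvdn_exp2l q le_d)) chinese_modl //.
  exact: modn_dvdm (dvdn_exp2l q le_d).
exists e; first exact/e_mod/leq_addl.
apply: amb_ext => r j; rewrite /apow /aproj /amask /=.
have [rq|rq] := eqVneq r q.
  by subst r; rewrite -(expr_mod e (gq j)) e_mod ?leq_addr // expr_mod.
by rewrite -(expr_mod e (gc r j rq)) chinese_modr // mod0n expr0.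
Qed.

Lemma subgroup_apow G g n : is_subgroup G -> G g -> G (apow g n).
Proof.
move=> [_ [G1 [GM _]]] Gg; elim: n => [|n IH]; first by rewrite apow0.
by rewrite apowS; apply: GM.
Qed.

Lemma subgroup_aproj G g q : is_subgroup G -> prime q -> G g -> G (aproj q g).
Proof.
move=> sG pq Gg; have [ambG _] := sG.
have [e _ <-] := aproj_apow 0 (ambG _ Gg) pq; exact: subgroup_apow.
Qed.

Lemma subgroupI G G' : is_subgroup G -> is_subgroup G' -> is_subgroup (fun g => G g /\ G' g).
Proof.
move=> [a1 [b1 [c1 d1]]] [_ [b2 [c2 d2]]]; split; first by move=> g [/a1].
split=> //; split; first by move=> g h [? ?] [? ?]; split; [apply: c1|apply: c2].
by move=> g [? ?]; split; [apply: d1|apply: d2].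
Qed.

Lemma Gammap_subgroup q : is_subgroup (@Gammap J q).
Proof.
split; first by move=> g [].
split; first by split; [exact: aone_ambient|].
split.
  move=> g h [ag gq] [ah hq]; split; first exact: amul_ambient.
  by move=> r j rq; rewrite /amul gq // hq // mulr1.
move=> g [ag gq]; split; first exact: ainv_ambient.
by move=> r j rq; rewrite /ainv gq // invr1.
Qed.

Lemma characterM G x g h : character G x -> G g -> G h -> x (amul g h) = x g * x h.
Proof. by case=> _; apply. Qed.

Lemma character_sub G G' x : (forall g, G' g -> G g) -> character G x -> character G' x.
Proof. by move=> G'G [xn xm]; split=> [g /G'G|g h /G'G Gg /G'G]; [apply: xn | apply: xm]. Qed.

Lemma character1 G x : is_subgroup G -> character G x -> x (@aone J) = 1.
Proof.
move=> [_ [G1 _]] [xn xm]; have x1_neq0 : x (@aone J) != 0.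
  by rewrite -normr_eq0 xn // oner_eq0.
apply: (mulIf x1_neq0); rewrite mul1r -xm //.
by congr x; apply: amb_ext => p j; rewrite /amul /aone mulr1.
Qed.

Lemma characterX G x g n : is_subgroup G -> character G x -> G g ->
  x (apow g n) = x g ^+ n.
Proof.
move=> sG cx Gg; elim: n => [|n IH]; first by rewrite apow0 (character1 sG cx).
by rewrite apowS cx.2 ?IH ?exprSr //; apply: subgroup_apow.
Qed.

Lemma characterV G x g : is_subgroup G -> character G x -> G g -> x (ainv g) = (x g)^-1.
Proof.
move=> sG cx Gg; have [ambG [_ [_ GV]]] := sG; have GVg := GV _ Gg.
have xg_neq0 : x g != 0 by rewrite -normr_eq0 cx.1 // oner_eq0.
apply: (mulfI xg_neq0); rewrite divff // -cx.2 //.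
by rewrite amulV ?(character1 sG cx) //; apply: ambG.
Qed.

End AmbientGroup.

Arguments apow {J} g n p.
Arguments amask {J} P g p.
Arguments aproj {J} q g p.

Section Adjoin.
Variables (J : nat -> Type) (K : amb J -> Prop) (a : amb J).
Hypotheses (sK : is_subgroup K) (aa : ambient a).
Arguments a : clear implicits.

Definition adjoin (g : amb J) : Prop := exists k t, K k /\ g = amul k (apow a t).

Lemma amul_apowACA k k' t t' :
  amul (amul k (apow a t)) (amul k' (apow a t')) = amul (amul k k') (apow a (t + t')).
Proof. by rewrite apowD; apply: amb_ext => r j; rewrite /amul mulrACA. Qed.

Lemma amul_apow0 k : amul k (apow a 0) = k.
Proof. by apply: amb_ext => r j; rewrite /amul /apow expr0 mulr1. Qed.

Lemma sub_adjoin g : K g -> adjoin g.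
Proof. by move=> Kg; exists g, 0%N; rewrite amul_apow0. Qed.

Lemma adjoin_gen : adjoin a.
Proof.
have [_ [K1 _]] := sK; exists (@aone J), 1%N; split=> //.
by apply: amb_ext => r j; rewrite /amul /apow /aone mul1r expr1.
Qed.

Lemma adjoin_subgroup : is_subgroup adjoin.
Proof.
have [ambK [K1 [KM KV]]] := sK.
split; first by move=> _ [k [t [Kk ->]]]; apply: amul_ambient (ambK _ Kk) (apow_ambient _ aa).
split; first exact: sub_adjoin.
split=> [_ _ [k [t [Kk ->]]] [k' [t' [Kk' ->]]]|_ [k [t [Kk ->]]]].
  by exists (amul k k'), (t + t')%N; rewrite amul_apowACA; split; first exact: KM.
have [M M_gt0 aM] := ambient_exponent aa.
exists (ainv k), (t * M.-1)%N; split; first exact: KV.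
apply: amb_ext => r j; rewrite /ainv /amul /apow invfM; congr (_ * _).
have arj_neq0 : a r j ^+ t != 0 by rewrite expf_neq0 ?ambient_neq0.
apply: (mulIf arj_neq0); rewrite mulVf // -exprD -mulnSr prednK // mulnC exprM.
by move/(congr1 (fun h => h r j)): aM; rewrite /apow => ->; rewrite expr1n.
Qed.

Lemma adjoin_min (A : amb J -> Prop) : is_subgroup A ->
  (forall g, K g -> A g) -> A a -> forall g, adjoin g -> A g.
Proof.
move=> sA KA Aa _ [k [t [Kk ->]]]; have [_ [_ [AM _]]] := sA.
by apply: AM; [exact: KA | exact: subgroup_apow].
Qed.

Lemma apow_index : exists m, [/\ (0 < m)%N, K (apow a m) & forall t, K (apow a t) -> (m %| t)%N].
Proof.
have [ambK [K1 [KM KV]]] := sK; have [M M_gt0 aM] := ambient_exponent aa.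
pose P m := (0 < m)%N && `[< K (apow a m) >].
have [|m /andP [m_gt0 /asboolP Kam] m_min] := @ex_minnP P.
  by exists M; rewrite /P M_gt0 aM; apply/asboolP.
exists m; split=> // t Kat; rewrite /dvdn; apply: contraT; rewrite -lt0n => tm_gt0.
suff /m_min : P (t %% m)%N by rewrite leqNgt ltn_pmod.
rewrite /P tm_gt0; apply/asboolP.
have -> : apow a (t %% m)%N = amul (apow a t) (ainv (apow (apow a m) (t %/ m)%N)).
  rewrite -apowM {2}(divn_eq t m) mulnC apowD; apply: amb_ext => r j.
  by rewrite /amul /ainv [X in X * _]mulrC mulfK // /apow expf_neq0 ?ambient_neq0.
by apply: KM => //; apply: KV; apply: subgroup_apow.
Qed.

Variables (psi : amb J -> CC) (m : nat) (w : CC).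
Hypotheses (cpsi : character K psi) (m_gt0 : (0 < m)%N) (Kam : K (apow a m))
  (m_dvd : forall t, K (apow a t) -> (m %| t)%N) (wm : w ^+ m = psi (apow a m)).

Lemma norm_root_character : `|w| = 1.
Proof. by apply/eqP; rewrite -(pexpr_eq1 m_gt0) // -normrX wm cpsi.1. Qed.

Lemma character_apow_root t : K (apow a t) -> psi (apow a t) = w ^+ t.
Proof.
move=> /m_dvd /divnK <-; rewrite mulnC apowM (characterX _ sK cpsi Kam).
by rewrite -wm exprM.
Qed.

Lemma adjoin_char_wd k k' t t' : K k -> K k' ->
  amul k (apow a t) = amul k' (apow a t') -> psi k * w ^+ t = psi k' * w ^+ t'.
Proof.
have [ambK [_ [KM KV]]] := sK.
wlog le_t't : k k' t t' / (t' <= t)%N.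
  move=> hyp Kk Kk' E; have [le|/ltnW le] := leqP t' t; first exact: hyp.
  by symmetry; apply: hyp.
move=> Kk Kk' E; have defk' : k' = amul k (apow a (t - t')).
  apply: amb_ext => r j; move/(congr1 (fun h => h r j)): E.
  rewrite /amul /apow -{1}(subnK le_t't) exprD mulrA => E.
  have at'_neq0 : a r j ^+ t' != 0 by rewrite expf_neq0 ?ambient_neq0.
  by rewrite (mulIf at'_neq0 E).
have Kat : K (apow a (t - t')).
  suff -> : apow a (t - t') = amul (ainv k) k' by apply: KM => //; apply: KV.
  rewrite defk'; apply: amb_ext => r j.
  by rewrite /amul /ainv mulrA mulVf ?mul1r // ambient_neq0 //; apply: ambK.
by rewrite defk' (characterM cpsi) // character_apow_root // -mulrA -exprD subnK.
Qed.

Definition adjoin_char (g : amb J) : CC := epsilon (inhabits 0)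
  (fun v => exists k t, [/\ K k, g = amul k (apow a t) & v = psi k * w ^+ t]).

Lemma adjoin_charE k t : K k -> adjoin_char (amul k (apow a t)) = psi k * w ^+ t.
Proof.
move=> Kk; rewrite /adjoin_char; set P := fun v => _.
have [|k' [t' [Kk' E ->]]] := epsilon_spec (inhabits 0) P; first by exists (psi k * w ^+ t), k, t.
exact: adjoin_char_wd.
Qed.

Lemma adjoin_char_character : character adjoin adjoin_char.
Proof.
have [_ [_ [KM _]]] := sK.
split=> [_ [k [t [Kk ->]]]|_ _ [k [t [Kk ->]]] [k' [t' [Kk' ->]]]].
  by rewrite adjoin_charE // normrM normrX norm_root_character expr1n mulr1 cpsi.1.
rewrite amul_apowACA !adjoin_charE ?(characterM cpsi) ?exprD 1?mulrACA //; exact: KM.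
Qed.

Lemma adjoin_char_ext k : K k -> adjoin_char k = psi k.
Proof. by move=> Kk; rewrite -{1}[k]amul_apow0 adjoin_charE // expr0 mulr1. Qed.

End Adjoin.

Lemma character_adjoin J (K : amb J -> Prop) a psi : is_subgroup K -> ambient a ->
  character K psi -> exists2 psi', character (adjoin K a) psi' & forall k, K k -> psi' k = psi k.
Proof.
move=> sK aa cpsi; have [m [m_gt0 Kam m_dvd]] := apow_index sK aa.
set w := m.-root (psi (apow a m)).
have wm : w ^+ m = psi (apow a m) by apply: rootCK.
exists (adjoin_char K a psi w).
  exact (adjoin_char_character sK aa cpsi m_gt0 Kam m_dvd wm).
exact (adjoin_char_ext sK aa cpsi Kam m_dvd wm).
Qed.

Section CharacterExtension.
Variables (J : nat -> Type) (A H : amb J -> Prop) (chi : amb J -> CC).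
Hypotheses (sA : is_subgroup A) (sH : is_subgroup H) (HA : forall g, H g -> A g)
  (cchi : character H chi).

Record partial_ext := PartialExt {
  pe_dom : amb J -> Prop;
  pe_char : amb J -> CC;
  pe_subgroup : is_subgroup pe_dom;
  pe_supH : forall g, H g -> pe_dom g;
  pe_subA : forall g, pe_dom g -> A g;
  pe_character : character pe_dom pe_char;
  pe_ext : forall g, H g -> pe_char g = chi g }.

Definition pe_le : rel partial_ext := fun s t => `[< (forall g, pe_dom s g -> pe_dom t g) /\
  (forall g, pe_dom s g -> pe_char s g = pe_char t g) >].

Section Chain.
Variable C : set partial_ext.
Hypothesis C_total : total_on C pe_le.

Definition chain_dom (g : amb J) : Prop := exists2 s, C s & pe_dom s g.
Definition chain_char (g : amb J) : CC :=
  epsilon (inhabits 0) (fun v => exists s, [/\ C s, pe_dom s g & v = pe_char s g]).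

Lemma chain_common s u g h : C s -> C u -> pe_dom s g -> pe_dom u h ->
  exists v, [/\ C v, pe_dom v g & pe_dom v h].
Proof.
move=> Cs Cu sg uh; case: (C_total Cs Cu) => /asboolP [le_dom _].
  by exists u; split=> //; apply: le_dom.
by exists s; split=> //; apply: le_dom.
Qed.

Lemma chain_charE s g : C s -> pe_dom s g -> chain_char g = pe_char s g.
Proof.
move=> Cs sg; rewrite /chain_char; set P := fun v => _.
have [|u [Cu ug ->]] := epsilon_spec (inhabits 0) P; first by exists (pe_char s g), s.
by case: (C_total Cs Cu) => /asboolP [_ le_char]; rewrite le_char.
Qed.

Variable s0 : partial_ext.
Hypothesis Cs0 : C s0.

Lemma chain_dom_subgroup : is_subgroup chain_dom.
Proof.
split; first by move=> g [s _ /pe_subA]; have [ambA _] := sA; apply: ambA.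
split; first by exists s0; case: (pe_subgroup s0) => _ [].
split=> [g h [s Cs sg] [u Cu uh]|g [s Cs sg]].
  have [v [Cv vg vh]] := chain_common Cs Cu sg uh.
  by exists v => //; have [_ [_ [vM _]]] := pe_subgroup v; apply: vM.
by exists s => //; have [_ [_ [_ sV]]] := pe_subgroup s; apply: sV.
Qed.

Lemma chain_char_character : character chain_dom chain_char.
Proof.
split=> [g [s Cs sg]|g h [s Cs sg] [u Cu uh]].
  by rewrite (chain_charE Cs sg); apply: (pe_character s).1.
have [v [Cv vg vh]] := chain_common Cs Cu sg uh.
have [_ [_ [vM _]]] := pe_subgroup v.
by rewrite !(chain_charE Cv) ?(characterM (pe_character v) vg vh) //; apply: vM.
Qed.

Definition chain_sup : partial_ext := PartialExt chain_dom_subgroup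
  (fun g Hg => ex_intro2 _ _ s0 Cs0 (pe_supH s0 Hg))
  (fun g '(ex_intro2 s _ sg) => pe_subA sg) chain_char_character
  (fun g Hg => etrans (chain_charE Cs0 (pe_supH s0 Hg)) (pe_ext s0 Hg)).

Lemma chain_sup_ub s : C s -> pe_le s chain_sup.
Proof.
by move=> Cs; apply/asboolP; split=> [g sg|g sg]; [exists s | rewrite /= (chain_charE Cs)].
Qed.

End Chain.

Lemma pe_max_full t : premaximal pe_le t -> forall g, A g -> pe_dom t g.
Proof.
move=> t_max a Aa; have [ambA [_ [AM _]]] := sA.
have [psi' cpsi' psi'E] := character_adjoin (pe_subgroup t) (ambA _ Aa) (pe_character t).
pose t' := PartialExt (adjoin_subgroup (pe_subgroup t) (ambA _ Aa))
  (fun g Hg => sub_adjoin a (pe_supH t Hg)) (adjoin_min sA (@pe_subA t) Aa) cpsi'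
  (fun g Hg => etrans (psi'E g (pe_supH t Hg)) (pe_ext t Hg)).
have /t_max /asboolP [t'_t _] : pe_le t t'.
  by apply/asboolP; split=> [g tg|g tg]; [exact: sub_adjoin | rewrite /= psi'E].
exact/t'_t/(adjoin_gen a (pe_subgroup t)).
Qed.

Lemma character_extension : exists2 y, character A y & forall h, H h -> y h = chi h.
Proof.
pose base := PartialExt sH (fun g Hg => Hg) HA cchi (fun g _ => erefl).
have [t t_max] : exists t, premaximal pe_le t.
  apply: (ZL_preorder base).
  - by move=> s; apply/asboolP.
  - move=> r s t /asboolP [rs_dom rs_char] /asboolP [st_dom st_char].
    apply/asboolP; split=> [g /rs_dom/st_dom //|g rg].
    by rewrite rs_char // st_char //; apply: rs_dom.
  - move=> C C_total; have [[s0 Cs0]|noC] := pselect (exists s, C s).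
      by exists (chain_sup C_total Cs0); apply: chain_sup_ub.
    by exists base => s Cs; case: noC; exists s.
have t_full := pe_max_full t_max.
exists (pe_char t); last exact: pe_ext.
split=> [g /t_full|g h /t_full tg /t_full th]; first exact: (pe_character t).1.
exact (characterM (pe_character t) tg th).
Qed.

End CharacterExtension.

Section PRProjections.
Variables (J : nat -> Type) (G : amb J -> Prop) (M : nat) (E : amb J -> Prop).
Hypotheses (sG : is_subgroup G) (E_PR : PR G M E).

Lemma PR_aproj_inj q x y : prime q -> (q %| M)%N -> E x -> E y ->
  aproj q x = aproj q y -> x = y.
Proof.
move=> pq qM Ex Ey xy; have [EG PRE] := E_PR; have [//|nxy] := pselect (x = y); exfalso.
have [z z_neq1 zq] := nontrivial_root_of_unity CC (prime_gt1 pq).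
pose phi g := if `[< g = x >] then z else 1.
have [|chi [cchi phi_chi]] := PRE phi.
  by move=> g _; rewrite /phi; case: ifP => _; rewrite ?expr1n // (expr_dvdn_eq1 qM zq).
have [ambG [_ [GM GV]]] := sG; have Gx := EG _ Ex; have Gy := EG _ Ey.
have chi_x : chi x = z by rewrite -phi_chi // /phi asboolT.
have chi_y : chi y = 1 by rewrite -phi_chi // /phi asboolF // => yx; case: nxy.
pose d := amul x (ainv y); have Gd : G d by apply: GM; last apply: GV.
have chi_d : chi d = z.
  by rewrite (characterM cchi Gx (GV _ Gy)) (characterV sG cchi Gy) chi_x chi_y invr1 mulr1.
have d_q : aproj q d = @aone J.
  apply: amb_ext => r j; rewrite /aproj /amask /d /amul /ainv /=.
  have [rq|//] := eqVneq r q; subst r.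
  move/(congr1 (fun h => h q j)): xy; rewrite /aproj /amask /= eqxx => ->.
  by rewrite divff // ambient_neq0 //; apply: ambG.
have [e e1 de] := aproj_apow 1 (ambG _ Gd) pq; rewrite expn1 in e1.
have : chi (apow d e) = 1 by rewrite de d_q (character1 sG cchi).
rewrite (characterX _ sG cchi Gd) chi_d -(expr_mod e zq) e1 expr_mod //.
by rewrite expr1 => /eqP; rewrite (negbTE z_neq1).
Qed.

Local Open Scope classical_set_scope.

Lemma PR_aproj_image q n : prime q -> (q ^ n %| M)%N -> PR (Gammap q) (q ^ n) (aproj q @` E).
Proof.
move=> pq qnM; have [EG PRE] := E_PR; have [ambG _] := sG.
split=> [_ [x Ex <-]|phi phi_n]; first exact/aproj_Gammap/ambG/EG.
have [|chi [cchi phi_chi]] := PRE (phi \o aproj q).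
  by move=> x Ex; apply: expr_dvdn_eq1 qnM (phi_n _ _); exists x.
have sGq := Gammap_subgroup J q.
have [y cy chi_y] := character_extension sGq (subgroupI sG sGq) (fun g => @proj2 _ _)
  (character_sub (fun g => @proj1 _ _) cchi).
exists y; split=> // _ [x Ex <-]; have Gx := EG _ Ex.
rewrite chi_y; last by split; [apply: subgroup_aproj | apply/aproj_Gammap/ambG].
have [e e1 de] := aproj_apow n (ambG _ Gx) pq.
have phi_xn : phi (aproj q x) ^+ (q ^ n) = 1 by apply: phi_n; exists x.
rewrite -[in RHS]de (characterX _ sG cchi Gx) -phi_chi //=.
by rewrite -(expr_mod e phi_xn) e1 expr_mod ?expr1.
Qed.

End PRProjections.

Section Decomposition.
Variables (J : nat -> Type) (k : nat) (p : 'I_k.+1 -> nat).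
Hypothesis p_inj : injective p.

Definition off_primes (q : nat) : bool := ~~ [exists i, q == p i].

Lemma amask_off_primes (g : amb J) : ambient g ->
  Gamma_outside (fun q => exists i, q = p i) (amask off_primes g).
Proof.
move=> ag; split; first exact: amask_ambient.
move=> q j [i qi]; rewrite /amask /off_primes.
by have -> : [exists i', q == p i'] by apply/existsP; exists i; apply/eqP.
Qed.

Lemma aproj_decomposition (x : amb J) : x = (fun q j => aproj (p ord0) x q j *
  (\prod_(i < k.+1 | i != ord0) aproj (p i) x q j) * amask off_primes x q j).
Proof.
apply: amb_ext => q j; rewrite /aproj /amask /off_primes /=.
have [/existsP [i0 /eqP q_i0]|q_off] := boolP [exists i, q == p i]; last first.
  have q_neq i : (q == p i) = false.
    by apply/negbTE; apply: contra q_off => ?; apply/existsP; exists i.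
  by rewrite q_neq big1 ?mul1r // => i _; rewrite q_neq.
have qE i : (q == p i) = (i0 == i) by rewrite q_i0 inj_eq.
rewrite /= mulr1 !qE; have [i0_0|i0_neq0] := eqVneq i0 ord0.
  by rewrite big1 ?mulr1 // => i i_neq0; rewrite qE i0_0 eq_sym (negbTE i_neq0).
rewrite mul1r (bigD1 i0) //= qE eqxx big1 ?mulr1 // => i /andP [_ i_neq].
by rewrite qE eq_sym (negbTE i_neq).
Qed.

End Decomposition.

Local Open Scope classical_set_scope.

Theorem proposition3p5 (J : nat -> Type) (Gamma0 : amb J -> Prop)
  (k : nat) (p n : 'I_k.+1 -> nat) (N : nat) (E : amb J -> Prop) :
  is_subgroup Gamma0 ->
  (forall i, prime (p i)) -> injective p -> (forall i, (0 < n i)%N) ->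
  N = (\prod_(i < k.+1) p i ^ n i)%N ->
  (forall g, E g -> Gamma0 g) ->
  PR Gamma0 N E ->
  exists (Es : 'I_k.+1 -> amb J -> Prop) (f : 'I_k.+1 -> amb J -> amb J)
         (beta : amb J -> amb J),
    (forall i, (forall g, Es i g -> Gammap (p i) g) /\
               PR (Gammap (p i)) (p i ^ n i)%N (Es i)) /\
    (forall i, i != ord0 ->
       (forall g, Es ord0 g -> Es i (f i g)) /\
       (forall g h, Es ord0 g -> Es ord0 h -> f i g = f i h -> g = h) /\
       (forall h, Es i h -> exists g, Es ord0 g /\ f i g = h)) /\
    (forall g, Es ord0 g -> Gamma_outside (fun q => exists i, q = p i) (beta g)) /\
    (forall x, E x <-> exists g, Es ord0 g /\
        x = (fun q j => g q j * (\prod_(i < k.+1 | i != ord0) f i g q j) * beta g q j)).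
Proof.
(* The hypothesis E ⊆ Gamma0 is also part of PR Gamma0 N E. *)
move=> sG p_prime p_inj n_gt0 defN _ E_PR.
have pn_dvdN i : (p i ^ n i %| N)%N by rewrite defN (bigD1 i) //= dvdn_mulr.
have p_dvdN i : (p i %| N)%N.
  by apply: dvdn_trans (pn_dvdN i); apply: dvdn_exp (n_gt0 i) (dvdnn _).
have E_inj i x y : E x -> E y -> aproj (p i) x = aproj (p i) y -> x = y.
  exact (PR_aproj_inj sG E_PR (p_prime i) (p_dvdN i)).
have ambE x : E x -> ambient x by have [ambG _] := sG; case: E_PR => EG _ /EG/ambG.
pose rep := 'pinv_(fun=> @aone J) E (aproj (p ord0)).
have repK x : E x -> rep (aproj (p ord0) x) = x.
  by move=> Ex; apply: pinvKV; rewrite ?inE // => u v; rewrite !inE; apply: E_inj.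
exists (fun i => aproj (p i) @` E), (fun i g => aproj (p i) (rep g)),
  (fun g => amask (off_primes p) (rep g)).
split; first by move=> i; have [] := PR_aproj_image sG E_PR (p_prime i) (pn_dvdN i).
split.
  move=> i _; split; first by move=> _ [x Ex <-]; rewrite repK //; exists x.
  split=> [_ _ [x Ex <-] [y Ey <-]|_ [x Ex <-]]; last first.
    by exists (aproj (p ord0) x); rewrite repK //; split=> //; exists x.
  by rewrite !repK // => /E_inj ->.
split; first by move=> _ [x Ex <-]; rewrite repK //; apply/amask_off_primes/ambE.
move=> x; split=> [Ex|[_ [[y Ey <-] ->]]]; last by rewrite /= repK // -aproj_decomposition.
by exists (aproj (p ord0) x); rewrite /= repK // -aproj_decomposition //; split=> //; exists x.
Qed.
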